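(* Fix $b>1$ and $(a,E,c)\in\mathcal{B}$, let $\mu=\mu(\cdot;a,E,c)$ be the associated $T$-periodic even traveling wave profile, and let $\mu_+(a,E,c):=\mu(0;a,E,c)$ denote the global maximum of $\mu$. Then $\mu_{xx}(0)<0$ and \[ \{\mu_+,\omega_1\}_{E,c}>0. \]
   Context: Fix $b>1$. For $c>0$, $a>0$, $\varphi<c$ let $V(\varphi;a,c)=-\tfrac12\varphi^2+\frac{a}{(b-1)(c-\varphi)^{b-1}}$. For $0<a<\frac{b^bc^{b+1}}{(b+1)^{b+1}}$ the equation $\varphi(c-\varphi)^b=a$ has exactly two solutions $\varphi_1\in(0,\frac{c}{b+1})$, $\varphi_2\in(\frac{c}{b+1},c)$. Let $\mathcal{B}=\{(a,E,c): c>0,\ 0<a<\frac{b^bc^{b+1}}{(b+1)^{b+1}},\ V(\varphi_2;a,c)<E<V(\varphi_1;a,c)\}$. For $(a,E,c)\in\mathcal{B}$ let $\varphi(\cdot;a,E,c)$ be the smooth periodic solution of $\tfrac12(\varphi')^2=E-V(\varphi;a,c)$ with $\varphi<c$, translated so that it is even with its maximum at $x=0$; it satisfies $\varphi-\varphi''=a/(c-\varphi)^b$, and $u(x,t)=\varphi(x-ct)$ is a traveling wave of $u_t-u_{txx}+(b+1)uu_x=bu_xu_{xx}+uu_{xxx}$. Set $\mu(x;a,E,c)=a/(c-\varphi(x;a,E,c))^b$ (the momentum density), a traveling wave of $m_t+um_x+bmu_x=0$. Let $\omega_1(a,E,c)=\frac{1}{2a^{1/b}}[2(b-1)E+(b-1)c^2]$.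 Jacobian notation: $\{f,g\}_{E,c}=f_Eg_c-f_cg_E$, with $f,g$ regarded as functions of $(a,E,c)$. *)

From Stdlib Require Import Reals Lra.
From Coquelicot Require Import Coquelicot.
Open Scope R_scope.

Definition Vpot (b a c p : R) : R :=
  - (p ^ 2) / 2 + a / ((b - 1) * Rpower (c - p) (b - 1)).

Definition inB (b a E c : R) : Prop :=
  0 < c /\ 0 < a /\ a < Rpower b b * Rpower c (b + 1) / Rpower (b + 1) (b + 1) /\
  exists p1 p2 : R,
    0 < p1 < c / (b + 1) /\ c / (b + 1) < p2 < c /\
    p1 * Rpower (c - p1) b = a /\ p2 * Rpower (c - p2) b = a /\
    Vpot b a c p2 < E < Vpot b a c p1.

Definition is_profile (b a E c : R) (f : R -> R) : Prop :=
  (forall (n : nat) (x : R), ex_derive_n f n x) /\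
  (forall x, f x < c) /\
  (forall x, / 2 * (Derive f x) ^ 2 = E - Vpot b a c (f x)) /\
  (forall x, f x - Derive_n f 2 x = a / Rpower (c - f x) b) /\
  (exists T : R, 0 < T /\ forall x, f (x + T) = f x) /\
  (forall x, f (- x) = f x) /\
  (forall x, f x <= f 0).

Definition mu_of (b a c : R) (f : R -> R) (x : R) : R := a / Rpower (c - f x) b.

Definition mu_plus (b : R) (phi : R -> R -> R -> R -> R) (a E c : R) : R :=
  mu_of b a c (phi a E c) 0.

Definition omega1 (b a E c : R) : R :=
  (2 * (b - 1) * E + (b - 1) * c ^ 2) / (2 * Rpower a (1 / b)).

From Stdlib Require Import Reals Lra Psatz.
From Coquelicot Require Import Coquelicot.
Open Scope R_scope.

(* The profile oscillates in the well of the potential [V] between two turning points of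
   energy [E]; its maximum [M = phi 0] is the upper one, which lies on the branch (p2, c)
   where [V] increases, so [V'(M) > 0].  Hence [mu''(0) = K'(M) phi''(0) = - K'(M) V'(M) < 0]
   for the increasing map [K : y |-> a (c - y)^(-b)].  As a function of [E] and [c], [M] is
   the root of [V(M; c) = E] on that branch; differentiating the inverse functions gives
   [M_E = 1 / V'(M)] and [(c - M)_c = - M / V'(M)], and then
     {mu_+, omega_1}_{E,c} = a b (b - 1) (c - M)^(-b) / (V'(M) a^(1/b)) > 0. *)

(** * Real analysis *)

Lemma Rpower_gt_0 x y : 0 < Rpower x y.
Proof. apply exp_pos. Qed.

Lemma Rpower_minus_1 w s : 0 < w -> Rpower w (s - 1) = Rpower w s / w.
Proof.
  intros Hw. unfold Rminus. rewrite Rpower_plus, Rpower_Ropp, Rpower_1 by exact Hw.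
  reflexivity.
Qed.

Lemma is_derive_Rpower_comp (u : R -> R) k s x du :
  is_derive u x du -> 0 < u x ->
  is_derive (fun y => k * Rpower (u y) s) x (k * s * Rpower (u x) (s - 1) * du).
Proof.
  intros Hu Hpos. unfold Rpower at 1. auto_derive.
  - split; [eexists; exact Hu|]. split; [exact Hpos|exact I].
  - replace (Derive (fun y : R => u y) x) with du by (symmetry; now apply is_derive_unique).
    change (exp (s * ln (u x))) with (Rpower (u x) s).
    rewrite Rpower_minus_1 by exact Hpos. field. lra.
Qed.

Lemma continuous_locally_gt (f : R -> R) x K :
  continuous f x -> K < f x -> locally x (fun y => K < f y).
Proof. intros Hf HK. exact (Hf _ (open_gt K (f x) HK)). Qed.

Lemma continuous_locally_lt (f : R -> R) x K :
  continuous f x -> f x < K -> locally x (fun y => f y < K).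
Proof. intros Hf HK. exact (Hf _ (open_lt K (f x) HK)). Qed.

Lemma is_derive_pos_incr (f f' : R -> R) x y : x < y ->
  (forall t, x <= t <= y -> is_derive f t (f' t)) ->
  (forall t, x < t < y -> 0 < f' t) -> f x < f y.
Proof.
  intros Hxy Hd Hpos.
  destruct (MVT_cor2 f f' x y Hxy) as [t [Hft Ht]].
  { intros t Ht. apply is_derive_Reals, Hd, Ht. }
  specialize (Hpos t Ht). nra.
Qed.

Lemma is_derive_neg_decr (f f' : R -> R) x y : x < y ->
  (forall t, x <= t <= y -> is_derive f t (f' t)) ->
  (forall t, x < t < y -> f' t < 0) -> f y < f x.
Proof.
  intros Hxy Hd Hneg.
  cut (- f x < - f y); [lra|].
  apply (is_derive_pos_incr (fun t => - f t) (fun t => - f' t) x y Hxy).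
  - intros t Ht. exact (is_derive_opp f t _ (Hd t Ht)).
  - intros t Ht. specialize (Hneg t Ht). lra.
Qed.

Lemma Derive_eq_0_at_max (f : R -> R) x lo hi : ex_derive f x -> lo < x < hi ->
  (forall y, lo < y < hi -> f y <= f x) -> Derive f x = 0.
Proof.
  intros Hd Hx Hmax. rewrite <- (Derive_Reals f x (ex_derive_Reals_0 f x Hd)).
  apply (deriv_maximum f lo hi x); try lra. intros y H1 H2. apply Hmax; lra.
Qed.

Lemma Derive_eq_0_at_min (f : R -> R) x lo hi : ex_derive f x -> lo < x < hi ->
  (forall y, lo < y < hi -> f x <= f y) -> Derive f x = 0.
Proof.
  intros Hd Hx Hmin.
  cut (Derive (fun y => - f y) x = 0); [rewrite Derive_opp; lra|].
  apply (Derive_eq_0_at_max _ x lo hi); [exact (ex_derive_opp f x Hd)|exact Hx|].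
  intros y Hy. specialize (Hmin y Hy). lra.
Qed.

Lemma Derive_2_comp_at_critical (K K' f : R -> R) x :
  (forall y, ex_derive f y) -> ex_derive (Derive f) x ->
  (forall y, is_derive K (f y) (K' (f y))) -> ex_derive K' (f x) -> Derive f x = 0 ->
  Derive_n (fun y => K (f y)) 2 x = K' (f x) * Derive_n f 2 x.
Proof.
  intros Hf Hf2 HK HK' Hf0.
  assert (HKf : forall y, Derive (fun z => K (f z)) y = K' (f y) * Derive f y).
  { intros y. apply is_derive_unique.
    rewrite Rmult_comm. exact (is_derive_comp K f y _ _ (HK y) (Derive_correct _ _ (Hf y))). }
  change (Derive (Derive (fun y => K (f y))) x = K' (f x) * Derive (Derive f) x).
  rewrite (Derive_ext _ _ x HKf). apply is_derive_unique.
  replace (K' (f x) * Derive (Derive f) x) with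
    (Derive (fun y => K' (f y)) x * Derive f x + K' (f x) * Derive (Derive f) x)
    by (rewrite Hf0; ring).
  apply (is_derive_mult (fun y => K' (f y)) (Derive f)).
  - apply Derive_correct, ex_derive_comp; [exact HK'|exact (Hf x)].
  - apply Derive_correct, Hf2.
  - intros; apply Rmult_comm.
Qed.

(* The error of the linearisation of [h] at [u y0], read through [h (u y) = y], bounds
   [|u y - u y0| <= 2 |y - y0| / |d|], which in turn controls the error of [u]. *)
Lemma is_derive_local_inverse (h u : R -> R) (y0 d : R) :
  locally y0 (fun y => h (u y) = y) -> continuous u y0 ->
  is_derive h (u y0) d -> d <> 0 -> is_derive u y0 (/ d).
Proof.
  intros Hinv Hu [_ Hh] Hd.
  split; [apply is_linear_scal_l|].
  intros y Hy eps.
  apply (is_filter_lim_locally_unique (K := R_AbsRing) (V := R_NormedModule)) in Hy.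
  subst y.
  assert (Had : 0 < Rabs d) by now apply Rabs_pos_lt.
  assert (Heta : 0 < Rmin (Rabs d / 2) (eps * Rabs d ^ 2 / 2)).
  { apply Rmin_pos; [lra|]. pose proof (cond_pos eps). pose proof (pow_lt _ 2 Had). nra. }
  pose proof (Rmin_l (Rabs d / 2) (eps * Rabs d ^ 2 / 2)) as Heta1.
  pose proof (Rmin_r (Rabs d / 2) (eps * Rabs d ^ 2 / 2)) as Heta2.
  set (eta := Rmin _ _) in *.
  assert (Hnear := Hu _ (Hh (u y0) (fun P HP => HP) (mkposreal eta Heta))).
  unfold filtermap in Hnear.
  assert (Hy0 : h (u y0) = y0) by exact (locally_singleton _ _ Hinv).
  eapply filter_imp; [| exact (filter_and _ _ Hinv Hnear)].
  intros y [Hhy Hdiff]. simpl in Hdiff. rewrite Hhy, Hy0 in Hdiff.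
  change (Rabs ((u y - u y0) - (y - y0) * / d) <= eps * Rabs (y - y0)).
  change (Rabs ((y - y0) - (u y - u y0) * d) <= eta * Rabs (u y - u y0)) in Hdiff.
  set (D := u y - u y0) in *. set (k := y - y0) in *.
  replace (D - k * / d) with (- ((k - D * d) / d)) by (field; exact Hd).
  rewrite Rabs_Ropp, Rabs_div by exact Hd.
  assert (HD : Rabs D * Rabs d <= Rabs k + eta * Rabs D).
  { rewrite <- Rabs_mult. replace (D * d) with (k - (k - D * d)) by ring.
    eapply Rle_trans; [apply Rabs_triang|]. rewrite Rabs_Ropp. lra. }
  pose proof (Rabs_pos D) as HD0.
  assert (HD2 : Rabs D * Rabs d <= 2 * Rabs k) by nra.
  apply Rle_div_l; [exact Had|].
  apply (Rle_trans _ (eta * Rabs D)); [exact Hdiff|].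
  apply (Rle_trans _ (eps * Rabs d ^ 2 / 2 * Rabs D)); [nra|].
  pose proof (cond_pos eps). nra.
Qed.

Lemma increasing_root_between (g : R -> R) lo hi p q x :
  (forall s t, lo < s -> s < t -> t < hi -> g s < g t) ->
  lo < p -> p < q -> q < hi -> lo < x < hi -> g p < g x < g q -> p < x < q.
Proof.
  intros Hg Hp Hpq Hq [Hlox Hxhi] [Hpx Hxq]. split.
  - destruct (Rtotal_order p x) as [|[->|Hxp]]; [assumption|lra|].
    pose proof (Hg x p Hlox Hxp ltac:(lra)). lra.
  - destruct (Rtotal_order x q) as [|[->|Hqx]]; [assumption|lra|].
    pose proof (Hg q x ltac:(lra) Hqx Hxhi). lra.
Qed.

(* A root [m s] of [G s] that stays inside an interval of strict increase of [G s]
   containing a fixed neighbourhood of [m s0] is trapped between the points where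
   [G s] changes sign, and these are stable under small changes of [s]. *)
Lemma increasing_root_continuous (G : R -> R -> R) (m : R -> R) s0 delta :
  0 < delta ->
  (forall p, m s0 - delta <= p <= m s0 + delta -> continuous (fun s => G s p) s0) ->
  locally s0 (fun s => exists lo hi,
    lo < m s0 - delta /\ m s0 + delta < hi /\ lo < m s < hi /\ G s (m s) = 0 /\
    forall p q, lo < p -> p < q -> q < hi -> G s p < G s q) ->
  continuous m s0.
Proof.
  intros Hdelta HG Hroot.
  apply filterlim_locally. intros eps.
  pose proof (cond_pos eps) as Heps.
  pose proof (Rmin_l (eps / 2) delta) as He1. pose proof (Rmin_r (eps / 2) delta) as He2.
  pose proof (Rmin_glb_lt (eps / 2) delta 0 ltac:(lra) Hdelta) as He.
  set (e := Rmin (eps / 2) delta) in *.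
  destruct (locally_singleton _ _ Hroot) as (lo & hi & Hlo & Hhi & Hm & Hm0 & Hincr).
  assert (Lneg : locally s0 (fun s => G s (m s0 - e) < 0)).
  { apply continuous_locally_lt; [apply HG; lra|].
    rewrite <- Hm0. apply Hincr; lra. }
  assert (Lpos : locally s0 (fun s => 0 < G s (m s0 + e))).
  { apply continuous_locally_gt; [apply HG; lra|].
    rewrite <- Hm0. apply Hincr; lra. }
  eapply filter_imp; [| exact (filter_and _ _ Hroot (filter_and _ _ Lneg Lpos))].
  intros s [(lo' & hi' & Hlo' & Hhi' & Hms & Hms0 & Hincr') [Hn Hp]].
  assert (Hb : m s0 - e < m s < m s0 + e).
  { apply (increasing_root_between (G s) lo' hi'); auto; lra. }
  change (Rabs (m s - m s0) < eps). apply Rabs_def1; lra.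
Qed.

Lemma periodic_interior_min (f : R -> R) T : continuity f -> 0 < T ->
  (forall x, f (x + T) = f x) ->
  exists xs, 0 < xs < 2 * T /\ forall y, 0 <= y <= 2 * T -> f xs <= f y.
Proof.
  intros Hf HT Hper.
  assert (FT : f T = f 0) by (rewrite <- (Hper 0), Rplus_0_l; reflexivity).
  assert (F2T : f (2 * T) = f 0) by (replace (2 * T) with (T + T) by ring; rewrite Hper; exact FT).
  destruct (continuity_ab_min f 0 (2 * T)) as [xm [Hmin Hxm]]; [lra|intros; apply Hf|].
  destruct (Req_dec xm 0) as [->|H0]; [exists T; split; [lra|]; rewrite FT; exact Hmin|].
  destruct (Req_dec xm (2 * T)) as [->|H2];
    [exists T; split; [lra|]; rewrite FT, <- F2T; exact Hmin|].
  exists xm. split; [lra|exact Hmin].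
Qed.

(** * The potential *)

Definition crit (b c p : R) : R := p * Rpower (c - p) b.

Definition dVpot (b a c p : R) : R := - p + a / Rpower (c - p) b.

Definition Wpot (b a w : R) : R := a / ((b - 1) * Rpower w (b - 1)).

Lemma Vpot_Wpot b a c p : Vpot b a c p = - (p ^ 2) / 2 + Wpot b a (c - p).
Proof. reflexivity. Qed.

Definition amax (b c : R) : R := Rpower b b * Rpower c (b + 1) / Rpower (b + 1) (b + 1).

Definition critical_points (b a c p1 p2 : R) : Prop :=
  0 < p1 < c / (b + 1) /\ c / (b + 1) < p2 < c /\ crit b c p1 = a /\ crit b c p2 = a.

Section Potential.

Variables (b a c : R).
Hypothesis hb : 1 < b.

Lemma is_derive_Vpot p : p < c -> is_derive (Vpot b a c) p (dVpot b a c p).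
Proof.
  intros Hp. unfold Vpot, Rpower at 1. auto_derive.
  - split; [lra|]. split; [|exact I].
    apply Rmult_integral_contrapositive; split; [lra|apply Rgt_not_eq, exp_pos].
  - fold (Rminus c p). change (exp ((b - 1) * ln (c - p))) with (Rpower (c - p) (b - 1)).
    unfold dVpot. rewrite Rpower_minus_1 by lra.
    pose proof (Rpower_gt_0 (c - p) b). field. lra.
Qed.

Lemma is_derive_Wpot w : 0 < w -> is_derive (Wpot b a) w (- (a / Rpower w b)).
Proof.
  intros Hw. unfold Wpot, Rpower at 1. auto_derive.
  - split; [lra|]. split; [|exact I].
    apply Rmult_integral_contrapositive; split; [lra|apply Rgt_not_eq, exp_pos].
  - change (exp ((b - 1) * ln w)) with (Rpower w (b - 1)). rewrite Rpower_minus_1 by lra.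
    pose proof (Rpower_gt_0 w b). field. lra.
Qed.

Lemma dVpot_crit p : dVpot b a c p = (a - crit b c p) / Rpower (c - p) b.
Proof. unfold dVpot, crit. pose proof (Rpower_gt_0 (c - p) b). field. lra. Qed.

Lemma is_derive_crit p : p < c ->
  is_derive (crit b c) p (Rpower (c - p) (b - 1) * (c - (b + 1) * p)).
Proof.
  intros Hp. unfold crit, Rpower at 1. auto_derive; [lra|].
  fold (Rminus c p). change (exp (b * ln (c - p))) with (Rpower (c - p) b).
  rewrite Rpower_minus_1 by lra. field. lra.
Qed.

Lemma crit_increasing x y : 0 < c -> x < y -> y <= c / (b + 1) -> crit b c x < crit b c y.
Proof.
  intros Hc Hxy Hy.
  assert (Hyc : (b + 1) * y <= c) by (apply Rle_div_r in Hy; lra).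
  apply (is_derive_pos_incr _ (fun p => Rpower (c - p) (b - 1) * (c - (b + 1) * p)) x y Hxy).
  { intros t Ht. apply is_derive_crit. nra. }
  intros t Ht. apply Rmult_lt_0_compat; [apply Rpower_gt_0|nra].
Qed.

Lemma crit_decreasing x y : c / (b + 1) <= x -> x < y -> y < c -> crit b c y < crit b c x.
Proof.
  intros Hx Hxy Hy.
  assert (Hxc : c <= (b + 1) * x) by (apply Rle_div_l in Hx; lra).
  apply (is_derive_neg_decr _ (fun p => Rpower (c - p) (b - 1) * (c - (b + 1) * p)) x y Hxy).
  { intros t Ht. apply is_derive_crit. lra. }
  intros t Ht. apply Rmult_pos_neg; [apply Rpower_gt_0|].
  assert ((b + 1) * x < (b + 1) * t) by (apply Rmult_lt_compat_l; lra). lra.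
Qed.

Section CriticalPoints.

Variables p1 p2 : R.
Hypothesis hcp : critical_points b a c p1 p2.

Lemma critical_points_c_pos : 0 < c.
Proof.
  destruct hcp as ([H1 H1'] & _).
  apply (Rmult_lt_reg_r (/ (b + 1))); [apply Rinv_0_lt_compat; lra|]. lra.
Qed.

Lemma critical_points_a_pos : 0 < a.
Proof.
  destruct hcp as ([H1 _] & _ & G1 & _).
  rewrite <- G1. apply Rmult_lt_0_compat; [exact H1|apply Rpower_gt_0].
Qed.

Lemma crit_lt_left t : t < p1 -> crit b c t < a.
Proof.
  destruct hcp as (H1 & H2 & G1 & G2). intros Ht.
  rewrite <- G1. apply crit_increasing; [exact critical_points_c_pos|lra|lra].
Qed.

Lemma crit_gt_mid t : p1 < t < p2 -> a < crit b c t.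
Proof.
  destruct hcp as (H1 & H2 & G1 & G2). intros Ht.
  destruct (Rle_lt_dec t (c / (b + 1))).
  - rewrite <- G1. apply crit_increasing; [exact critical_points_c_pos|lra|lra].
  - rewrite <- G2. apply crit_decreasing; lra.
Qed.

Lemma crit_lt_right t : p2 < t < c -> crit b c t < a.
Proof.
  destruct hcp as (H1 & H2 & G1 & G2). intros Ht.
  rewrite <- G2. apply crit_decreasing; lra.
Qed.

Lemma dVpot_pos_right t : p2 < t < c -> 0 < dVpot b a c t.
Proof.
  intros Ht. rewrite dVpot_crit. apply Rdiv_lt_0_compat; [|apply Rpower_gt_0].
  pose proof (crit_lt_right t Ht). lra.
Qed.

Lemma Vpot_increasing_left x y : x < y -> y <= p1 -> Vpot b a c x < Vpot b a c y.
Proof.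
  pose proof hcp as (H1 & H2 & _). intros Hxy Hy.
  apply (is_derive_pos_incr _ (dVpot b a c) x y Hxy); [intros t Ht; apply is_derive_Vpot; lra|].
  intros t Ht. rewrite dVpot_crit. apply Rdiv_lt_0_compat; [|apply Rpower_gt_0].
  pose proof (crit_lt_left t ltac:(lra)). lra.
Qed.

Lemma Vpot_decreasing_mid x y : p1 <= x -> x < y -> y <= p2 -> Vpot b a c y < Vpot b a c x.
Proof.
  pose proof hcp as (H1 & H2 & _). intros Hx Hxy Hy.
  apply (is_derive_neg_decr _ (dVpot b a c) x y Hxy); [intros t Ht; apply is_derive_Vpot; lra|].
  intros t Ht. rewrite dVpot_crit. unfold Rdiv.
  apply Rmult_neg_pos; [|apply Rinv_0_lt_compat, Rpower_gt_0].
  pose proof (crit_gt_mid t ltac:(lra)). lra.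
Qed.

Lemma Vpot_increasing_right x y : p2 <= x -> x < y -> y < c -> Vpot b a c x < Vpot b a c y.
Proof.
  pose proof hcp as (H1 & H2 & _). intros Hx Hxy Hy.
  apply (is_derive_pos_incr _ (dVpot b a c) x y Hxy); [intros t Ht; apply is_derive_Vpot; lra|].
  intros t Ht. apply dVpot_pos_right. lra.
Qed.

Lemma Vpot_le_p1 x : x <= p2 -> Vpot b a c x <= Vpot b a c p1.
Proof.
  pose proof hcp as (H1 & H2 & _). intros Hx.
  destruct (Rtotal_order x p1) as [Hlt|[->|Hgt]]; [|lra|].
  - left. apply Vpot_increasing_left; lra.
  - left. apply Vpot_decreasing_mid; lra.
Qed.

Lemma Vpot_ge_p2 x : p1 <= x < c -> Vpot b a c p2 <= Vpot b a c x.
Proof.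
  pose proof hcp as (H1 & H2 & _). intros Hx.
  destruct (Rtotal_order x p2) as [Hlt|[->|Hgt]]; [|lra|].
  - left. apply Vpot_decreasing_mid; lra.
  - left. apply Vpot_increasing_right; lra.
Qed.

Section Level.

Variable E : R.
Hypothesis hE : Vpot b a c p2 < E < Vpot b a c p1.

Lemma Vpot_crit_neq t : t < c -> crit b c t = a -> Vpot b a c t <> E.
Proof.
  intros Ht Hcrit HV.
  destruct (Rtotal_order t p1) as [Hlt|[->|Hgt]]; [|lra|].
  - pose proof (crit_lt_left t Hlt). lra.
  - destruct (Rtotal_order t p2) as [Hlt'|[->|Hgt']]; [|lra|].
    + pose proof (crit_gt_mid t (conj Hgt Hlt')). lra.
    + pose proof (crit_lt_right t (conj Hgt' Ht)). lra.
Qed.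

(* [m < M] are consecutive turning points of an orbit of energy [E]. *)
Lemma Vpot_level_top m M : m < M < c -> Vpot b a c m = E -> Vpot b a c M = E ->
  (forall y, m <= y <= M -> Vpot b a c y <= E) -> p2 < M.
Proof.
  intros HmM Hm HM Hbelow.
  destruct (Rlt_le_dec p2 M) as [|HMp2]; [assumption|exfalso].
  destruct (Rle_lt_dec M p1) as [HMp1|Hp1M].
  - pose proof (Vpot_increasing_left m M ltac:(lra) HMp1). lra.
  - destruct (Rle_lt_dec p1 m) as [Hp1m|Hmp1].
    + pose proof (Vpot_decreasing_mid m M Hp1m ltac:(lra) HMp2). lra.
    + pose proof (Hbelow p1 ltac:(lra)). lra.
Qed.

End Level.
End CriticalPoints.
End Potential.

Lemma inB_iff b a E c : 1 < b ->
  inB b a E c <-> a < amax b c /\ exists p1 p2,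
    critical_points b a c p1 p2 /\ Vpot b a c p2 < E < Vpot b a c p1.
Proof.
  intros Hb. split.
  - intros (_ & _ & Hbd & p1 & p2 & H1 & H2 & G1 & G2 & HE).
    split; [exact Hbd|]. exists p1, p2. exact (conj (conj H1 (conj H2 (conj G1 G2))) HE).
  - intros (Hbd & p1 & p2 & Hcp & HE).
    pose proof (critical_points_c_pos b a c Hb p1 p2 Hcp) as Hc.
    pose proof (critical_points_a_pos b a c p1 p2 Hcp) as Ha.
    destruct Hcp as (H1 & H2 & G1 & G2).
    split; [exact Hc|]. split; [exact Ha|]. split; [exact Hbd|].
    exists p1, p2. exact (conj H1 (conj H2 (conj G1 (conj G2 HE)))).
Qed.

(** * The profile *)

Section Profile.

Variables (b a E c p1 p2 : R) (f : R -> R).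
Hypotheses (hb : 1 < b) (hcp : critical_points b a c p1 p2)
  (hE : Vpot b a c p2 < E < Vpot b a c p1) (hf : is_profile b a E c f).

Lemma profile_top : p2 < f 0 < c /\ Vpot b a c (f 0) = E.
Proof.
  destruct hf as (Hder & Hlt & Hen & Hode & (T & HT & Hper) & _ & Hmax).
  assert (Hd : forall x, ex_derive f x) by (intros x; exact (Hder 1%nat x)).
  assert (Hcont : continuity f).
  { intros x. apply continuity_pt_filterlim.
    exact (@ex_derive_continuous R_AbsRing R_NormedModule f x (Hd x)). }
  assert (Hturn : forall x, Derive f x = 0 -> Vpot b a c (f x) = E).
  { intros x H0. specialize (Hen x). rewrite H0 in Hen. lra. }
  assert (HM : Vpot b a c (f 0) = E).
  { apply Hturn, (Derive_eq_0_at_max f 0 (-1) 1); auto; lra. }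
  split; [|exact HM]. split; [|apply Hlt].
  destruct (periodic_interior_min f T Hcont HT Hper) as [xs [Hxs Hmin]].
  assert (Hm : Vpot b a c (f xs) = E).
  { apply Hturn, (Derive_eq_0_at_min f xs 0 (2 * T)); auto.
    intros y Hy. apply Hmin. lra. }
  destruct (Rle_lt_or_eq_dec (f xs) (f 0) (Hmax xs)) as [Hlt0|Heq].
  - apply (Vpot_level_top b a c hb p1 p2 hcp E hE (f xs)); auto.
    intros y Hy. destruct (IVT_gen f xs 0 y Hcont) as [x [_ <-]].
    { rewrite Rmin_left, Rmax_right; lra. }
    specialize (Hen x). pose proof (pow2_ge_0 (Derive f x)). lra.
  - exfalso.
    assert (Hconst : locally T (fun t => f t = f 0)).
    { exists (mkposreal T HT). intros t Ht. change (Rabs (t - T) < T) in Ht.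
      apply Rabs_def2 in Ht.
      apply Rle_antisym; [apply Hmax|]. rewrite <- Heq. apply Hmin. lra. }
    assert (Hcrit : crit b c (f 0) = a).
    { specialize (Hode T).
      rewrite (Derive_n_ext_loc _ _ 2 T Hconst), Derive_n_const,
        (locally_singleton _ _ Hconst) in Hode.
      unfold crit. pose proof (Rpower_gt_0 (c - f 0) b).
      replace (f 0) with (a / Rpower (c - f 0) b) at 1 by lra. field. lra. }
    exact (Vpot_crit_neq b a c hb p1 p2 hcp E hE (f 0) (Hlt 0) Hcrit HM).
Qed.

Lemma profile_Derive_2_top : Derive_n f 2 0 = - dVpot b a c (f 0).
Proof.
  destruct hf as (_ & _ & _ & Hode & _). specialize (Hode 0). unfold dVpot. lra.
Qed.

Lemma mu_of_Derive_2_top : Derive_n (mu_of b a c f) 2 0 < 0.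
Proof.
  destruct profile_top as [Htop _].
  pose proof hf as (Hder & Hlt & _ & _ & _ & _ & Hmax).
  set (K := fun y => a * Rpower (c - y) (- b)).
  set (K' := fun y => a * (- b) * Rpower (c - y) (- b - 1) * (-1)).
  assert (HK : forall y, y < c -> is_derive K y (K' y)).
  { intros y Hy. apply (is_derive_Rpower_comp (fun z => c - z)); [|lra].
    auto_derive; [exact I|ring]. }
  rewrite (Derive_n_ext _ (fun x => K (f x))).
  2:{ intros x. unfold mu_of, K. rewrite Rpower_Ropp. reflexivity. }
  rewrite (Derive_2_comp_at_critical K K' f 0).
  - rewrite profile_Derive_2_top.
    assert (HK'pos : 0 < K' (f 0)).
    { unfold K'. pose proof (Rpower_gt_0 (c - f 0) (- b - 1)).
      pose proof (critical_points_a_pos b a c p1 p2 hcp).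
      replace (a * - b * Rpower (c - f 0) (- b - 1) * -1) with (a * b * Rpower (c - f 0) (- b - 1))
        by ring.
      repeat apply Rmult_lt_0_compat; lra. }
    pose proof (dVpot_pos_right b a c hb p1 p2 hcp (f 0) Htop).
    apply Rmult_pos_neg; lra.
  - intros x. exact (Hder 1%nat x).
  - exact (Hder 2%nat 0).
  - intros y. apply HK, Hlt.
  - unfold K', Rpower. auto_derive. pose proof (Hlt 0). lra.
  - apply (Derive_eq_0_at_max f 0 (-1) 1); [exact (Hder 1%nat 0)|lra|].
    intros y _. apply Hmax.
Qed.

End Profile.

(** * Dependence on the parameters *)

Lemma continuous_Vpot_c b a c p : 1 < b -> p < c -> continuous (fun c' => Vpot b a c' p) c.
Proof.
  intros Hb Hp. apply (@ex_derive_continuous R_AbsRing R_NormedModule).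
  unfold Vpot, Rpower. auto_derive.
  split; [lra|]. split; [|exact I].
  apply Rmult_integral_contrapositive; split; [lra|apply Rgt_not_eq, exp_pos].
Qed.

Lemma continuity_pt_crit b c p : p < c -> continuity_pt (crit b c) p.
Proof.
  intros Hp. apply continuity_pt_filterlim, (@ex_derive_continuous R_AbsRing R_NormedModule).
  eexists. apply is_derive_crit. exact Hp.
Qed.

(* The critical points persist under small changes of [c], by the intermediate value theorem. *)
Lemma inB_locally_c b a E c p1 p2 q : 1 < b -> critical_points b a c p1 p2 ->
  Vpot b a c p2 < E < Vpot b a c p1 -> a < amax b c -> p2 < q < c ->
  locally c (fun c' => a < amax b c' /\ exists p1' p2', critical_points b a c' p1' p2' /\
    p2' < q /\ Vpot b a c' p2' < E < Vpot b a c' p1').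
Proof.
  intros Hb Hcp HE Hbd Hq.
  pose proof (critical_points_c_pos b a c Hb p1 p2 Hcp) as Hc.
  pose proof (critical_points_a_pos b a c p1 p2 Hcp) as Ha.
  pose proof Hcp as (H1 & H2 & G1 & G2).
  assert (Hdiv : continuous (fun c' => c' / (b + 1)) c).
  { apply (@ex_derive_continuous R_AbsRing R_NormedModule). auto_derive. lra. }
  assert (L1 : locally c (fun c' => p1 < c' / (b + 1))).
  { apply continuous_locally_gt; [exact Hdiv|lra]. }
  assert (L2 : locally c (fun c' => c' / (b + 1) < p2)).
  { apply continuous_locally_lt; [exact Hdiv|lra]. }
  assert (L3 : locally c (fun c' => q < c')).
  { apply continuous_locally_gt; [apply continuous_id|lra]. }
  assert (L4 : locally c (fun c' => a < crit b c' (c' / (b + 1)))).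
  { apply continuous_locally_gt.
    - apply (@ex_derive_continuous R_AbsRing R_NormedModule). unfold crit, Rpower. auto_derive.
      assert (c / (b + 1) < c) by (apply Rlt_div_l; nra). lra.
    - rewrite <- G1. apply crit_increasing; lra. }
  assert (L5 : locally c (fun c' => crit b c' q < a)).
  { apply continuous_locally_lt.
    - apply (@ex_derive_continuous R_AbsRing R_NormedModule). unfold crit, Rpower. auto_derive. lra.
    - apply (crit_lt_right b a c Hb p1 p2 Hcp). lra. }
  assert (L6 : locally c (fun c' => Vpot b a c' p2 < E)).
  { apply continuous_locally_lt; [apply continuous_Vpot_c; lra|lra]. }
  assert (L7 : locally c (fun c' => E < Vpot b a c' p1)).
  { apply continuous_locally_gt; [apply continuous_Vpot_c; lra|lra]. }
  assert (L8 : locally c (fun c' => a < amax b c')).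
  { apply continuous_locally_gt; [|exact Hbd].
    apply (@ex_derive_continuous R_AbsRing R_NormedModule). unfold amax, Rpower. auto_derive.
    repeat split; lra. }
  eapply filter_imp; [|exact (filter_and _ _ L1 (filter_and _ _ L2 (filter_and _ _ L3
    (filter_and _ _ L4 (filter_and _ _ L5 (filter_and _ _ L6 (filter_and _ _ L7 L8)))))))].
  intros c' (K1 & K2 & K3 & K4 & K5 & K6 & K7 & K8).
  assert (Hcrit_cont : forall t, t < c' -> continuity_pt (fun p => crit b c' p - a) t).
  { intros t Ht. apply continuity_pt_minus; [apply continuity_pt_crit; lra|].
    apply continuity_pt_const. intros ? ?. reflexivity. }
  destruct (Ranalysis5.IVT_interv (fun p => crit b c' p - a) 0 (c' / (b + 1)))
    as [p1' [Hp1' Gp1']].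
  { intros t Ht. apply Hcrit_cont. lra. }
  { lra. }
  { unfold crit. lra. }
  { lra. }
  destruct (Ranalysis5.IVT_interv (fun p => - (crit b c' p - a)) (c' / (b + 1)) q)
    as [p2' [Hp2' Gp2']].
  { intros t Ht. apply continuity_pt_opp, Hcrit_cont. lra. }
  { lra. }
  { lra. }
  { lra. }
  simpl in Gp1', Gp2'.
  assert (p1' <> 0) by (intros ->; unfold crit in Gp1'; lra).
  assert (p1' <> c' / (b + 1)) by (intros ->; lra).
  assert (p2' <> c' / (b + 1)) by (intros ->; lra).
  assert (p2' <> q) by (intros ->; lra).
  assert (Hcp' : critical_points b a c' p1' p2') by (repeat split; lra).
  split; [exact K8|]. exists p1', p2'. split; [exact Hcp'|]. split; [lra|].
  pose proof (Vpot_ge_p2 b a c' Hb p1' p2' Hcp' p2 ltac:(lra)).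
  pose proof (Vpot_le_p1 b a c' Hb p1' p2' Hcp' p1 ltac:(lra)).
  lra.
Qed.

Section ProfileFamily.

Variables (b : R) (phi : R -> R -> R -> R -> R) (a : R).
Hypotheses (hb : 1 < b)
  (hphi : forall a E c, inB b a E c -> is_profile b a E c (phi a E c)).

Lemma family_top E c p1 p2 : critical_points b a c p1 p2 ->
  Vpot b a c p2 < E < Vpot b a c p1 -> a < amax b c ->
  p2 < phi a E c 0 < c /\ Vpot b a c (phi a E c 0) = E.
Proof.
  intros Hcp HE Hbd. apply (profile_top b a E c p1 p2 (phi a E c) hb Hcp HE).
  apply hphi, inB_iff; [exact hb|]. split; [exact Hbd|]. exists p1, p2. auto.
Qed.

Lemma is_derive_gap_E E c p1 p2 : critical_points b a c p1 p2 ->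
  Vpot b a c p2 < E < Vpot b a c p1 -> a < amax b c ->
  is_derive (fun E' => c - phi a E' c 0) E (/ - dVpot b a c (phi a E c 0)).
Proof.
  intros Hcp HE Hbd.
  destruct (family_top E c p1 p2 Hcp HE Hbd) as [[HM1 HM2] HV].
  set (M := phi a E c 0) in *.
  assert (Hnear : locally E (fun E' => Vpot b a c p2 < E' < Vpot b a c p1)).
  { apply filter_and; [apply continuous_locally_gt|apply continuous_locally_lt];
      solve [apply continuous_id|lra]. }
  set (delta := Rmin (M - p2) (c - M) / 2).
  assert (Hdelta : 0 < delta /\ p2 < M - delta /\ M + delta < c).
  { pose proof (Rmin_l (M - p2) (c - M)). pose proof (Rmin_r (M - p2) (c - M)).
    pose proof (Rmin_glb_lt (M - p2) (c - M) 0 ltac:(lra) ltac:(lra)). unfold delta. lra. }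
  destruct Hdelta as (Hdelta & Hlo & Hhi).
  assert (Htop : continuous (fun E' => phi a E' c 0) E).
  { apply (increasing_root_continuous (fun E' p => Vpot b a c p - E') _ E delta); [lra| |].
    - intros p _. apply (continuous_minus (fun _ => Vpot b a c p) (fun E' => E')).
      + apply continuous_const.
      + apply continuous_id.
    - eapply filter_imp; [|exact Hnear]. intros E' HE'.
      destruct (family_top E' c p1 p2 Hcp HE' Hbd) as [HM' HV'].
      exists p2, c. cbv beta. fold M. repeat split; try lra.
      intros p q Hp Hpq Hq. pose proof (Vpot_increasing_right b a c hb p1 p2 Hcp p q). lra. }
  apply (is_derive_local_inverse (fun w => Vpot b a c (c - w))).
  - eapply filter_imp; [|exact Hnear]. intros E' HE'.
    replace (c - (c - phi a E' c 0)) with (phi a E' c 0) by ring.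
    exact (proj2 (family_top E' c p1 p2 Hcp HE' Hbd)).
  - apply (continuous_minus (fun _ => c) (fun E' => phi a E' c 0)).
    + apply continuous_const.
    + exact Htop.
  - replace (- dVpot b a c M) with (-1 * dVpot b a c (c - (c - M)))
      by (replace (c - (c - M)) with M by ring; ring).
    apply (is_derive_comp (Vpot b a c) (fun w => c - w)).
    + apply is_derive_Vpot; lra.
    + auto_derive; [exact I|ring].
  - pose proof (dVpot_pos_right b a c hb p1 p2 Hcp M ltac:(lra)). lra.
Qed.

Lemma is_derive_gap_c E c p1 p2 : critical_points b a c p1 p2 ->
  Vpot b a c p2 < E < Vpot b a c p1 -> a < amax b c ->
  is_derive (fun c' => c' - phi a E c' 0) c (- phi a E c 0 / dVpot b a c (phi a E c 0)).
Proof.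
  intros Hcp HE Hbd.
  destruct (family_top E c p1 p2 Hcp HE Hbd) as [[HM1 HM2] HV].
  set (M := phi a E c 0) in *.
  set (delta := Rmin (M - p2) (c - M) / 2).
  assert (Hdelta : 0 < delta /\ p2 < M - delta /\ M + delta < c).
  { pose proof (Rmin_l (M - p2) (c - M)). pose proof (Rmin_r (M - p2) (c - M)).
    pose proof (Rmin_glb_lt (M - p2) (c - M) 0 ltac:(lra) ltac:(lra)). unfold delta. lra. }
  destruct Hdelta as (Hdelta & Hlo & Hhi).
  assert (Hnear : locally c (fun c' => M + delta < c' /\ exists p2',
    0 < p2' < M - delta /\ p2' < phi a E c' 0 < c' /\ Vpot b a c' (phi a E c' 0) = E /\
    forall p q, p2' <= p -> p < q -> q < c' -> Vpot b a c' p < Vpot b a c' q)).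
  { eapply filter_imp; [|exact (filter_and _ _
      (continuous_locally_gt _ _ _ (continuous_id c) Hhi)
      (inB_locally_c b a E c p1 p2 (M - delta) hb Hcp HE Hbd ltac:(lra)))].
    intros c' [Hc' [Hbd' (p1' & p2' & Hcp' & Hq & HE')]].
    destruct (family_top E c' p1' p2' Hcp' HE' Hbd') as [HM' HV'].
    split; [exact Hc'|]. exists p2'. split; [destruct Hcp' as ([? ?] & [? ?] & _); lra|].
    split; [exact HM'|]. split; [exact HV'|].
    exact (Vpot_increasing_right b a c' hb p1' p2' Hcp'). }
  assert (Htop : continuous (fun c' => phi a E c' 0) c).
  { apply (increasing_root_continuous (fun c' p => Vpot b a c' p - E) _ c delta); [lra| |].
    - intros p Hp. cbv beta in Hp. fold M in Hp.
      apply (continuous_minus (fun c' => Vpot b a c' p) (fun _ => E)).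
      + apply continuous_Vpot_c; lra.
      + apply continuous_const.
    - eapply filter_imp; [|exact Hnear]. intros c' [Hc' (p2' & Hq & HM' & HV' & Hincr)].
      exists p2', c'. cbv beta. fold M. repeat split; try lra.
      intros p q Hp Hpq Hq'. pose proof (Hincr p q ltac:(lra) Hpq Hq'). lra. }
  (* [Vpot c' M' = E] solved for [c'] in terms of the gap [c' - M']. *)
  assert (HM0 : 0 < M) by (destruct Hcp as ([? ?] & [? ?] & _); lra).
  set (h := fun w => w + sqrt (2 * (Wpot b a w - E))).
  assert (HWM : 2 * (Wpot b a (c - M) - E) = M ^ 2) by (rewrite Vpot_Wpot in HV; lra).
  replace (- M / dVpot b a c M) with (/ (- dVpot b a c M / M)).
  2:{ pose proof (dVpot_pos_right b a c hb p1 p2 Hcp M ltac:(lra)). field. split; lra. }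
  apply (is_derive_local_inverse h).
  - eapply filter_imp; [|exact Hnear]. intros c' [Hc' (p2' & Hq & HM' & HV' & _)].
    unfold h. rewrite Vpot_Wpot in HV'.
    replace (2 * (Wpot b a (c' - phi a E c' 0) - E)) with (phi a E c' 0 ^ 2) by lra.
    rewrite sqrt_pow2 by lra. ring.
  - apply (continuous_minus (fun c' => c') (fun c' => phi a E c' 0)).
    + apply continuous_id.
    + exact Htop.
  - unfold h. auto_derive; fold M; change (Wpot b a (c - M) + - E) with (Wpot b a (c - M) - E).
    + split; [eexists; apply is_derive_Wpot; lra|]. split; [|exact I].
      rewrite HWM. apply pow_lt. exact HM0.
    + replace (Derive (fun x : R => Wpot b a x) (c - M)) with (- (a / Rpower (c - M) b))
        by (symmetry; apply is_derive_unique, is_derive_Wpot; lra).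
      rewrite HWM, sqrt_pow2 by lra. unfold dVpot. field.
      split; [apply Rgt_not_eq, Rpower_gt_0|lra].
  - pose proof (dVpot_pos_right b a c hb p1 p2 Hcp M ltac:(lra)).
    apply Rlt_not_eq. unfold Rdiv. apply Rmult_neg_pos; [lra|apply Rinv_0_lt_compat, HM0].
Qed.

Lemma mu_plus_Rpower E c : mu_plus b phi a E c = a * Rpower (c - phi a E c 0) (- b).
Proof. unfold mu_plus, mu_of. rewrite Rpower_Ropp. reflexivity. Qed.

Lemma is_derive_mu_plus_E E c p1 p2 : critical_points b a c p1 p2 ->
  Vpot b a c p2 < E < Vpot b a c p1 -> a < amax b c ->
  is_derive (fun E' => mu_plus b phi a E' c) E
    (a * b * Rpower (c - phi a E c 0) (- b - 1) / dVpot b a c (phi a E c 0)).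
Proof.
  intros Hcp HE Hbd.
  destruct (family_top E c p1 p2 Hcp HE Hbd) as [HM _].
  pose proof (dVpot_pos_right b a c hb p1 p2 Hcp _ HM).
  apply (is_derive_ext (fun E' => a * Rpower (c - phi a E' c 0) (- b))).
  { intros E'. symmetry. apply mu_plus_Rpower. }
  replace (a * b * Rpower (c - phi a E c 0) (- b - 1) / dVpot b a c (phi a E c 0))
    with (a * - b * Rpower (c - phi a E c 0) (- b - 1) * / - dVpot b a c (phi a E c 0))
    by (field; lra).
  apply (is_derive_Rpower_comp (fun E' => c - phi a E' c 0)); [|lra].
  exact (is_derive_gap_E E c p1 p2 Hcp HE Hbd).
Qed.

Lemma is_derive_mu_plus_c E c p1 p2 : critical_points b a c p1 p2 ->
  Vpot b a c p2 < E < Vpot b a c p1 -> a < amax b c ->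
  is_derive (fun c' => mu_plus b phi a E c') c
    (a * b * Rpower (c - phi a E c 0) (- b - 1) * phi a E c 0 / dVpot b a c (phi a E c 0)).
Proof.
  intros Hcp HE Hbd.
  destruct (family_top E c p1 p2 Hcp HE Hbd) as [HM _].
  pose proof (dVpot_pos_right b a c hb p1 p2 Hcp _ HM).
  apply (is_derive_ext (fun c' => a * Rpower (c' - phi a E c' 0) (- b))).
  { intros c'. symmetry. apply mu_plus_Rpower. }
  replace (a * b * Rpower (c - phi a E c 0) (- b - 1) * phi a E c 0 / dVpot b a c (phi a E c 0))
    with (a * - b * Rpower (c - phi a E c 0) (- b - 1)
          * (- phi a E c 0 / dVpot b a c (phi a E c 0)))
    by (field; lra).
  apply (is_derive_Rpower_comp (fun c' => c' - phi a E c' 0)); [|lra].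
  exact (is_derive_gap_c E c p1 p2 Hcp HE Hbd).
Qed.

End ProfileFamily.

Lemma is_derive_omega1_E b a E c :
  is_derive (fun E' => omega1 b a E' c) E ((b - 1) / Rpower a (1 / b)).
Proof.
  pose proof (Rpower_gt_0 a (1 / b)). unfold omega1. auto_derive; [exact I|field; lra].
Qed.

Lemma is_derive_omega1_c b a E c :
  is_derive (fun c' => omega1 b a E c') c ((b - 1) * c / Rpower a (1 / b)).
Proof.
  pose proof (Rpower_gt_0 a (1 / b)). unfold omega1. auto_derive; [exact I|field; lra].
Qed.

Theorem lemmaA1 (b : R) (hb : 1 < b) (phi : R -> R -> R -> R -> R)
  (hphi : forall a E c, inB b a E c -> is_profile b a E c (phi a E c))
  (a E c : R) (hB : inB b a E c) :
  Derive_n (mu_of b a c (phi a E c)) 2 0 < 0 /\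
  ex_derive (fun E' => mu_plus b phi a E' c) E /\
  ex_derive (fun c' => mu_plus b phi a E c') c /\
  Derive (fun E' => mu_plus b phi a E' c) E * Derive (fun c' => omega1 b a E c') c
  - Derive (fun c' => mu_plus b phi a E c') c * Derive (fun E' => omega1 b a E' c) E > 0.
Proof.
  destruct (proj1 (inB_iff b a E c hb) hB) as [Hbd (p1 & p2 & Hcp & HE)].
  pose proof (is_derive_mu_plus_E b phi a hb hphi E c p1 p2 Hcp HE Hbd) as DE.
  pose proof (is_derive_mu_plus_c b phi a hb hphi E c p1 p2 Hcp HE Hbd) as Dc.
  split; [exact (mu_of_Derive_2_top b a E c p1 p2 (phi a E c) hb Hcp HE (hphi a E c hB))|].
  split; [eexists; exact DE|]. split; [eexists; exact Dc|].
  rewrite (is_derive_unique (fun E' : R => mu_plus b phi a E' c) E _ DE),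
    (is_derive_unique (fun c' : R => mu_plus b phi a E c') c _ Dc),
    (is_derive_unique (fun E' : R => omega1 b a E' c) E _ (is_derive_omega1_E b a E c)),
    (is_derive_unique (fun c' : R => omega1 b a E c') c _ (is_derive_omega1_c b a E c)).
  destruct (family_top b phi a hb hphi E c p1 p2 Hcp HE Hbd) as [HM _].
  pose proof (dVpot_pos_right b a c hb p1 p2 Hcp _ HM) as HD.
  pose proof (critical_points_a_pos b a c p1 p2 Hcp) as Ha.
  pose proof (Rpower_gt_0 (c - phi a E c 0) (- b - 1)).
  pose proof (Rpower_gt_0 a (1 / b)).
  set (M := phi a E c 0) in *. set (A := Rpower a (1 / b)) in *.
  set (K := a * b * Rpower (c - M) (- b - 1)).
  assert (HK : 0 < K) by (unfold K; repeat apply Rmult_lt_0_compat; lra).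
  replace (K / dVpot b a c M * ((b - 1) * c / A) - K * M / dVpot b a c M * ((b - 1) / A))
    with (K * (b - 1) * (c - M) / (dVpot b a c M * A)) by (field; lra).
  apply Rdiv_lt_0_compat; apply Rmult_lt_0_compat; try apply Rmult_lt_0_compat; lra.
Qed.
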